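(* Let $x_0\in C^\eta_p$ (some $\eta\in\mathbb{N}^p$) be continuous on $[-\tau,0]$, and let $x:[-\tau,T]\to\mathbb{R}^d$ be a solution with initial segment $x_0$. Let $m,\bar m\in\mathbb{N}$ with $\bar m\ge1$, $0<\varepsilon_1,\varepsilon_2<h$, $t_1=mh+\varepsilon_1$, $t_2=(m+\bar m)h+\varepsilon_2$, with $(m+\bar m+1)h+\varepsilon_2\le T$, and $n=\lfloor m/p\rfloor-1\ge0$. For $k\in\{0,\dots,n+1\}$ and $i\in\{0,\dots,p\}$ let $L^{[k]}_i$, $C^{[k]}_{i,j}$ ($j=1,\dots,\bar m$), $R^{[k]}_i$, $\widetilde R^{[k]}_i$ be boxes such that $x^{[k]}(s)$ lies in $L^{[k]}_i$ for $s\in[(m-i)h+\varepsilon_1,(m-i+1)h]$, in $C^{[k]}_{i,j}$ for $s\in[(m-i+j)h,(m-i+j+1)h]$, in $R^{[k]}_i$ for $s\in[(m-i+\bar m)h,(m-i+\bar m)h+\varepsilon_2]$, and in $\widetilde R^{[k]}_i$ for $s\in[(m-i+\bar m+1)h,(m-i+\bar m+1)h+\varepsilon_2]$. Then for every $t\in[t_1,t_2]$: (a) $x_t\in C^n_p$ and $x_t\in C^{n+1}([-\tau,0])$; (b) $z(x_t)\in\mathrm{hull}\big(L^{[0]}_0,C^{[0]}_{0,1},\dots,C^{[0]}_{0,\bar m-1},R^{[0]}_0\big)$; (c) for $i\in\{1,\dots,p\}$, $k\in\{0,\dots,n\}$: $j_{i,[k]}(x_t)\in\mathrm{hull}\big(L^{[k]}_i,C^{[k]}_{i,1},\dots,C^{[k]}_{i,\bar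 m-1},R^{[k]}_i\big)$; (d) for $i\in\{1,\dots,p\}$ and $s\in[0,h)$: $\xi_i(x_t)(s)\in\mathrm{hull}\big(L^{[n+1]}_i,C^{[n+1]}_{i,1},\dots,C^{[n+1]}_{i,\bar m},\widetilde R^{[n+1]}_i\big)$.
   Context: Fix integers $d\ge1$, $p\ge1$, a delay $\tau>0$, and set $h=\tau/p$, grid points $t_i=-ih$. Let $f:\mathbb{R}^d\times\mathbb{R}^d\to\mathbb{R}^d$ be $C^\infty$ and consider the DDE $x'(t)=f(x(t),x(t-\tau))$. Segments: $x_t(s)=x(t+s)$, $s\in[-\tau,0]$. For $g$ of class $C^k$, $g^{[k]}:=g^{(k)}/k!$ (one-sided derivatives at endpoints). For $\eta\in\mathbb{N}^p$, $C^\eta_p$ is the set of $x:[-\tau,0]\to\mathbb{R}^d$ such that for each $i$ the restriction of $x$ to $[t_i,t_i+h)$ coincides with the restriction of some $\tilde x_i\in C^{\eta_i+1}([t_i,t_i+h])$; for $s\in[t_i,t_i+h)$, $x^{[k]}(s):=\tilde x_i^{[k]}(s)$. $C^n_p:=C^{(n,\dots,n)}_p$. For $x\in C^n_p$: $z(x)=x(0)$, $j_{i,[k]}(x)=x^{[k]}(t_i)$ for $0\le k\le n$, and $\xi_i(x)(s)=x^{[n+1]}(t_i+s)$ for $s\in[0,h)$. A solution on $[-\tau,T]$ with initial segment $x_0$ is $x:[-\tau,T]\to\mathbb{R}^d$ with $x|_{[-\tau,0]}=x_0$, continuous on $[0,T]$, whose right derivative at each $t\in[0,T)$ exists and equals $f(x(t),x(t-\tau))$.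 A box is a product of $d$ compact intervals; $\mathrm{hull}(A_1,\dots,A_r)$ is the smallest box containing $A_1\cup\dots\cup A_r$. *)

From Stdlib Require Import Reals List Factorial.
From Coquelicot Require Import Coquelicot.
From mathcomp Require Import ssreflect ssrbool eqtype fintype.

Open Scope R_scope.

Definition vec (d : nat) := 'I_d -> R.

Definition Icc (a b : R) : R -> Prop := fun s => a <= s <= b.

Definition has_deriv_within (a b : R) (g : R -> R) (s l : R) : Prop :=
  filterlim (fun u => (g u - g s) / (u - s))
    (within (fun u => a <= u <= b /\ u <> s) (locally s)) (locally l).

Definition cont_within (D : R -> Prop) (g : R -> R) (s : R) : Prop :=
  filterlim g (within D (locally s)) (locally (g s)).

Definition deriv_chain {d : nat} (a b : R) (k : nat) (g : R -> vec d)
    (D : nat -> R -> vec d) : Prop :=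
  (forall s, a <= s <= b -> forall c, D O s c = g s c) /\
  (forall (j : nat) s, (j < k)%nat -> a <= s <= b -> forall c,
      has_deriv_within a b (fun u => D j u c) s (D (S j) s c)).

Definition Ck_on {d : nat} (a b : R) (k : nat) (g : R -> vec d) : Prop :=
  exists D, deriv_chain a b k g D /\
    forall s, a <= s <= b -> forall c, cont_within (Icc a b) (fun u => D k u c) s.

(* v = g^{[k]}(s) = g^{(k)}(s)/k!, derivatives taken relative to [a,b] *)
Definition taylor_at {d : nat} (a b : R) (k : nat) (g : R -> vec d) (s : R)
    (v : vec d) : Prop :=
  exists D, deriv_chain a b k g D /\ forall c, v c = D k s c / INR (fact k).

Definition hstep (p : nat) (tau : R) : R := tau / INR p.
Definition tgrid (p : nat) (tau : R) (i : nat) : R := - INR i * hstep p tau.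

(* x in C^eta_p  (eta : N^p, used at indices 1..p) *)
Definition in_Cp {d : nat} (p : nat) (tau : R) (eta : nat -> nat) (y : R -> vec d) : Prop :=
  forall i : nat, (1 <= i <= p)%nat -> exists yt : R -> vec d,
    Ck_on (tgrid p tau i) (tgrid p tau i + hstep p tau) (eta i + 1) yt /\
    forall s, tgrid p tau i <= s < tgrid p tau i + hstep p tau -> forall c, yt s c = y s c.

(* v = y^{[k]}(s) for s in [t_i, t_i + h), computed from the piece ytilde_i *)
Definition piece_taylor {d : nat} (p : nat) (tau : R) (y : R -> vec d)
    (i k : nat) (s : R) (v : vec d) : Prop :=
  exists yt : R -> vec d,
    (forall u, tgrid p tau i <= u < tgrid p tau i + hstep p tau -> forall c, yt u c = y u c) /\
    taylor_at (tgrid p tau i) (tgrid p tau i + hstep p tau) k yt s v.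

(* j_{i,[k]}(y) = y^{[k]}(t_i) *)
Definition jcoef {d : nat} (p : nat) (tau : R) (y : R -> vec d) (i k : nat) (v : vec d) :=
  piece_taylor p tau y i k (tgrid p tau i) v.

(* xi_i(y)(s) = y^{[n+1]}(t_i + s) *)
Definition xicoef {d : nat} (p : nat) (tau : R) (n : nat) (y : R -> vec d) (i : nat)
    (s : R) (v : vec d) :=
  piece_taylor p tau y i (S n) (tgrid p tau i + s) v.

Definition seg {d : nat} (x : R -> vec d) (t : R) : R -> vec d := fun s => x (t + s).

Record box (d : nat) := Box { blo : vec d ; bhi : vec d }.
Arguments blo {d}. Arguments bhi {d}.

Definition in_box {d : nat} (v : vec d) (B : box d) : Prop :=
  forall c, blo B c <= v c <= bhi B c.

(* membership in hull(A_1,...,A_r): the smallest box containing the union,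
   i.e. the intersection of all boxes containing every A_j *)
Definition in_hull {d : nat} (v : vec d) (As : list (box d)) : Prop :=
  forall B : box d,
    (forall A, In A As -> forall w, in_box w A -> in_box w B) -> in_box v B.

(* smoothness of f : R^d x R^d -> R^d: all iterated partial derivatives
   exist everywhere and are continuous *)
Definition upd {d : nat} (a : vec d) (j : 'I_d) (u : R) : vec d :=
  fun c => if c == j then u else a c.

Definition updp {d : nat} (w : vec d * vec d) (j : 'I_d + 'I_d) (u : R) : vec d * vec d :=
  match j with
  | inl j => (upd (fst w) j u, snd w)
  | inr j => (fst w, upd (snd w) j u)
  end.

Definition coordp {d : nat} (w : vec d * vec d) (j : 'I_d + 'I_d) : R :=
  match j with inl j => fst w j | inr j => snd w j end.

Definition partial {d : nat} (G : vec d * vec d -> R) (j : 'I_d + 'I_d)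
    (w : vec d * vec d) : R :=
  Derive (fun u => G (updp w j u)) (coordp w j).

Fixpoint iter_partial {d : nat} (js : list ('I_d + 'I_d)) (G : vec d * vec d -> R)
    : vec d * vec d -> R :=
  match js with
  | nil => G
  | j :: js' => partial (iter_partial js' G) j
  end.

Definition cont2 {d : nat} (G : vec d * vec d -> R) (w : vec d * vec d) : Prop :=
  forall eps : R, 0 < eps -> exists delta : R, 0 < delta /\
    forall w' : vec d * vec d,
      (forall c, Rabs (fst w' c - fst w c) < delta /\ Rabs (snd w' c - snd w c) < delta) ->
      Rabs (G w' - G w) < eps.

Definition smooth_fun {d : nat} (f : vec d -> vec d -> vec d) : Prop :=
  forall (c : 'I_d) (js : list ('I_d + 'I_d)) (w : vec d * vec d),
    let G := iter_partial js (fun w0 => f (fst w0) (snd w0) c) in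
    (forall j, ex_derive (fun u => G (updp w j u)) (coordp w j)) /\ cont2 G w.

Definition is_solution {d : nat} (tau : R) (f : vec d -> vec d -> vec d)
    (x0 : R -> vec d) (T : R) (x : R -> vec d) : Prop :=
  (forall s, -tau <= s <= 0 -> forall c, x s c = x0 s c) /\
  (forall t, 0 <= t <= T -> forall c, cont_within (Icc 0 T) (fun u => x u c) t) /\
  (forall t, 0 <= t < T -> forall c,
      filterlim (fun u => (x u c - x t c) / (u - t)) (at_right t)
        (locally (f (x t) (x (t - tau)) c))).

Definition hull_list {d : nat} (A : box d) (B : nat -> box d) (r : nat) (Z : box d)
    : list (box d) :=
  A :: map B (seq 1 r) ++ Z :: nil.

From Stdlib Require Import Reals List Lra Lia Classical Factorial FunctionalExtensionality.
From Coquelicot Require Import Coquelicot.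
From mathcomp Require Import ssreflect ssrbool eqtype fintype.
From mathcomp Require seq.

Open Scope R_scope.

(* The delay smooths the solution.  On (0, T) its right derivative
   f(x(t), x(t - tau)) is continuous, hence a genuine derivative; on each further
   interval of length tau the right-hand side inherits, through the chain rule for the
   smooth f, the regularity that x had one delay earlier.  So x is of class C^k on
   ((k - 1) tau, T).  Since m h + eps1 - tau > n tau, every segment x_t of the window
   lives where x is C^(n+1): its piecewise Taylor coefficients are the scaled
   derivatives of x (one-sided derivatives on a nondegenerate interval being unique),
   and each time involved falls into one of the consecutive intervals L, C_1, ..., R
   on which the boxes enclose exactly these scaled derivatives. *)

Lemma ball_Rabs (x e y : R) : ball x e y <-> Rabs (y - x) < e.
Proof. by []. Qed.

Lemma cont_within_eps D g s : cont_within D g s ->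
  forall e, 0 < e -> exists dl, 0 < dl /\
    forall u, D u -> Rabs (u - s) < dl -> Rabs (g u - g s) < e.
Proof.
move=> H e he.
have [dl Hdl] := proj1 (filterlim_locally _ _) H (mkposreal e he).
exists dl; split; first exact: cond_pos.
by move=> u Du Hu; apply: Hdl.
Qed.

Lemma cont_within_of_eps D g s :
  (forall e, 0 < e -> exists dl, 0 < dl /\
    forall u, D u -> Rabs (u - s) < dl -> Rabs (g u - g s) < e) ->
  cont_within D g s.
Proof.
move=> H; apply/filterlim_locally => eps.
have [dl [Hdl H']] := H eps (cond_pos eps).
by exists (mkposreal dl Hdl) => u Hu Du; apply: H'.
Qed.

Lemma continuity_pt_eps g s : continuity_pt g s ->
  forall e, 0 < e -> exists dl, 0 < dl /\
    forall u, Rabs (u - s) < dl -> Rabs (g u - g s) < e.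
Proof.
move=> /continuity_pt_filterlim H e he.
have [dl Hdl] := proj1 (filterlim_locally _ _) H (mkposreal e he).
exists dl; split; first exact: cond_pos.
by move=> u Hu; apply: Hdl.
Qed.

Lemma continuity_pt_of_eps g s :
  (forall e, 0 < e -> exists dl, 0 < dl /\
    forall u, Rabs (u - s) < dl -> Rabs (g u - g s) < e) ->
  continuity_pt g s.
Proof.
move=> H; apply/continuity_pt_filterlim/filterlim_locally => eps.
have [dl [Hdl H']] := H eps (cond_pos eps).
by exists (mkposreal dl Hdl) => u Hu; apply: H'.
Qed.

Lemma at_right_lim_eps q t l : filterlim q (at_right t) (locally l) ->
  forall e, 0 < e -> exists dl, 0 < dl /\
    forall u, t < u < t + dl -> Rabs (q u - l) < e.
Proof.
move=> H e he.
have [dl Hdl] := proj1 (filterlim_locally _ _) H (mkposreal e he).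
exists dl; split; first exact: cond_pos.
move=> u Hu; apply: Hdl; last lra.
by apply/ball_Rabs; rewrite Rabs_right /=; lra.
Qed.

Lemma is_derive_eps g s l : is_derive g s l ->
  forall e, 0 < e -> exists dl, 0 < dl /\
    forall h, h <> 0 -> Rabs h < dl -> Rabs ((g (s + h) - g s) / h - l) < e.
Proof.
move=> /is_derive_Reals H e he; have [dl Hdl] := H e he.
by exists dl; split; [exact: cond_pos | done].
Qed.

Lemma is_derive_of_eps g s l :
  (forall e, 0 < e -> exists dl, 0 < dl /\
    forall h, h <> 0 -> Rabs h < dl -> Rabs ((g (s + h) - g s) / h - l) < e) ->
  is_derive g s l.
Proof.
move=> H; apply/is_derive_Reals => e he; have [dl [Hdl H']] := H e he.
by exists (mkposreal dl Hdl).
Qed.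

Lemma has_deriv_within_eps a b g s l : has_deriv_within a b g s l ->
  forall e, 0 < e -> exists dl, 0 < dl /\ forall u, a <= u <= b -> u <> s ->
    Rabs (u - s) < dl -> Rabs ((g u - g s) / (u - s) - l) < e.
Proof.
move=> H e He.
have [dl Hdl] := proj1 (filterlim_locally _ _) H (mkposreal e He).
exists dl; split; first exact: cond_pos.
by move=> u Hu Hus Hd; apply: Hdl.
Qed.

Lemma has_deriv_within_of_eps a b g s l :
  (forall e, 0 < e -> exists dl, 0 < dl /\ forall u, a <= u <= b -> u <> s ->
    Rabs (u - s) < dl -> Rabs ((g u - g s) / (u - s) - l) < e) ->
  has_deriv_within a b g s l.
Proof.
move=> H; apply/filterlim_locally => eps.
have [dl [Hdl H']] := H eps (cond_pos eps).
by exists (mkposreal dl Hdl) => u Hu [Du Dn]; apply: H'.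
Qed.

Lemma locally_open_interval a b s : a < s < b -> locally s (fun u => a < u < b).
Proof.
move=> Hs; have Hp : 0 < Rmin (s - a) (b - s) by apply: Rmin_pos; lra.
exists (mkposreal _ Hp) => y /ball_Rabs /= Hy.
have := Rmin_l (s - a) (b - s); have := Rmin_r (s - a) (b - s).
have [? ?] := Rabs_def2 _ _ Hy; lra.
Qed.

Lemma locally_eq_open a b (g g' : R -> R) s : a < s < b ->
  (forall u, a < u < b -> g u = g' u) -> locally s (fun u => g u = g' u).
Proof. by move=> Hs H; apply: filter_imp (locally_open_interval _ _ _ Hs). Qed.

Lemma continuity_pt_of_ex_derive g s : ex_derive g s -> continuity_pt g s.
Proof. by move=> H; apply/continuity_pt_filterlim; apply: ex_derive_continuous. Qed.

(** * Functions of class C^k on an open interval *)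

(* Iterated derivatives are taken with Coquelicot's total [Derive]; [ex_derive]
   at each level makes them genuine. *)
Fixpoint Ck_open (k : nat) (g : R -> R) (a b : R) : Prop :=
  match k with
  | O => forall s, a < s < b -> continuity_pt g s
  | S k' => (forall s, a < s < b -> ex_derive g s) /\ Ck_open k' (Derive g) a b
  end.

Lemma Ck_open_ext k : forall g g' a b, (forall s, a < s < b -> g s = g' s) ->
  Ck_open k g a b -> Ck_open k g' a b.
Proof.
elim: k => [|k IH] g g' a b H /=.
  move=> Hc s Hs; apply: continuity_pt_ext_loc (Hc s Hs); exact: locally_eq_open Hs H.
move=> [Hd Hc]; split.
  move=> s Hs; apply: ex_derive_ext_loc (Hd s Hs); exact: locally_eq_open Hs H.
apply: IH Hc => s Hs; apply: Derive_ext_loc; exact: locally_eq_open Hs H.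
Qed.

Lemma Ck_open_pred k : forall g a b, Ck_open (S k) g a b -> Ck_open k g a b.
Proof.
elim: k => [|k IH] g a b /=.
  by move=> [Hd _] s Hs; apply: continuity_pt_of_ex_derive (Hd s Hs).
by move=> [Hd Hc]; split => //; apply: IH.
Qed.

Lemma Ck_open_sub k : forall g a b a' b', a <= a' -> b' <= b ->
  Ck_open k g a b -> Ck_open k g a' b'.
Proof.
elim: k => [|k IH] g a b a' b' H1 H2 /=.
  by move=> Hc s Hs; apply: Hc; lra.
move=> [Hd Hc]; split; last exact: IH Hc.
by move=> s Hs; apply: Hd; lra.
Qed.

Lemma Ck_open_const k : forall c a b, Ck_open k (fun _ => c) a b.
Proof.
elim: k => [|k IH] c a b /=.
  by move=> s _; apply: continuity_pt_const.
split; first by move=> s _; apply: ex_derive_const.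
by apply: Ck_open_ext (IH 0 a b) => s _; rewrite Derive_const.
Qed.

Lemma Ck_open_plus k : forall g g' a b, Ck_open k g a b -> Ck_open k g' a b ->
  Ck_open k (fun s => g s + g' s) a b.
Proof.
elim: k => [|k IH] g g' a b /=.
  by move=> H H' s Hs; apply: continuity_pt_plus (H s Hs) (H' s Hs).
move=> [Hd Hc] [Hd' Hc']; split.
  by move=> s Hs; apply: ex_derive_plus (Hd s Hs) (Hd' s Hs).
apply: Ck_open_ext (IH _ _ _ _ Hc Hc') => s Hs.
by rewrite Derive_plus //; [apply: Hd | apply: Hd'].
Qed.

Lemma Ck_open_mult k : forall g g' a b, Ck_open k g a b -> Ck_open k g' a b ->
  Ck_open k (fun s => g s * g' s) a b.
Proof.
elim: k => [|k IH] g g' a b /=.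
  by move=> H H' s Hs; apply: continuity_pt_mult (H s Hs) (H' s Hs).
move=> [Hd Hc] [Hd' Hc']; split.
  by move=> s Hs; apply: ex_derive_mult (Hd s Hs) (Hd' s Hs).
have Hg : Ck_open k g a b by apply: Ck_open_pred.
have Hg' : Ck_open k g' a b by apply: Ck_open_pred.
apply: Ck_open_ext (Ck_open_plus _ _ _ _ _ (IH _ _ _ _ Hc Hg') (IH _ _ _ _ Hg Hc')).
by move=> s Hs; rewrite Derive_mult //; [apply: Hd | apply: Hd'].
Qed.

Lemma Ck_open_shift k : forall g a b e, Ck_open k g a b ->
  Ck_open k (fun s => g (s + e)) (a - e) (b - e).
Proof.
elim: k => [|k IH] g a b e /=.
  move=> H s Hs; apply: continuity_pt_of_eps => eps Heps.
  have [dl [Hdl H']] := continuity_pt_eps _ _ (H (s + e) ltac:(lra)) eps Heps.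
  exists dl; split => // u Hu; apply: H'.
  by replace (u + e - (s + e)) with (u - s) by ring.
move=> [Hd Hc]; split.
  move=> s Hs; apply: ex_derive_comp; first by apply: Hd; lra.
  by apply: ex_derive_plus; [apply: ex_derive_id | apply: ex_derive_const].
apply: Ck_open_ext (IH _ _ _ e Hc) => s Hs.
by have /= -> := Derive_n_comp_trans g 1 s e.
Qed.

Lemma Derive_n_S g j s : Derive_n g (S j) s = Derive_n (Derive g) j s.
Proof. by elim: j s => [|j IH] s //=; apply: Derive_ext => u; apply: IH. Qed.

Lemma Ck_open_Derive_n k : forall g a b, Ck_open k g a b -> forall j s, a < s < b ->
  ((j < k)%nat -> is_derive (Derive_n g j) s (Derive_n g (S j) s)) /\
  ((j <= k)%nat -> continuity_pt (Derive_n g j) s).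
Proof.
elim: k => [|k IH] g a b /=.
  move=> H j s Hs; split => Hj; first lia.
  have -> : j = O by lia.
  exact: H.
move=> [Hd Hc] [|j] s Hs.
  split => _; first exact: Derive_correct (Hd s Hs).
  exact: continuity_pt_of_ex_derive (Hd s Hs).
have [H1 H2] := IH _ _ _ Hc j s Hs.
have Hloc : locally s (fun u => Derive_n (Derive g) j u = Derive_n g (S j) u).
  by apply: locally_eq_open Hs _ => u _; rewrite Derive_n_S.
split => Hj.
  have -> : Derive (Derive_n g (S j)) s = Derive_n (Derive g) (S j) s :=
    Derive_n_S g (S j) s.
  exact: is_derive_ext_loc Hloc (H1 ltac:(lia)).
exact: continuity_pt_ext_loc Hloc (H2 ltac:(lia)).
Qed.

(** * Chain rule for the smooth right-hand side *)

Section ChainRule.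
Import seq.
Variable d : nat.
Local Notation J := ('I_d + 'I_d)%type.
Local Notation W := (vec d * vec d)%type.

Lemma coordp_updp (w : W) (j j' : J) v :
  coordp (updp w j v) j' = if j' == j then v else coordp w j'.
Proof. by case: j => a; case: j' => b. Qed.

Lemma coordp_inj (w w' : W) : (forall j : J, coordp w j = coordp w' j) -> w = w'.
Proof.
case: w => a b; case: w' => a' b' H.
by f_equal; apply: functional_extensionality => c; [exact: (H (inl c)) | exact: (H (inr c))].
Qed.

Lemma updp_coordp (w : W) j : updp w j (coordp w j) = w.
Proof. by apply: coordp_inj => j'; rewrite coordp_updp; case: eqP => [->|]. Qed.

Lemma updp_updp (w : W) j v v' : updp (updp w j v) j v' = updp w j v'.
Proof. by apply: coordp_inj => j'; rewrite !coordp_updp; case: eqP. Qed.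

Lemma coordp_updp_eq (w : W) j v : coordp (updp w j v) j = v.
Proof. by rewrite coordp_updp eqxx. Qed.

Definition override (l : seq J) (w w' : W) : W :=
  foldr (fun j acc => updp acc j (coordp w' j)) w l.

Lemma coordp_override l w w' j :
  coordp (override l w w') j = if j \in l then coordp w' j else coordp w j.
Proof.
elim: l => [|i l IH] //=; rewrite coordp_updp in_cons IH.
by case: eqP => [->|].
Qed.

Lemma override_enum w w' : override (enum {: J}) w w' = w'.
Proof. by apply: coordp_inj => j; rewrite coordp_override mem_enum. Qed.

Definition sumJ (l : seq J) (F : J -> R) : R := foldr (fun j acc => F j + acc) 0 l.

Definition close_to (w w0 : W) (dl : R) := forall j : J, Rabs (coordp w j - coordp w0 j) < dl.

Lemma close_to_override l w w0 dl : 0 < dl -> close_to w w0 dl ->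
  close_to (override l w0 w) w0 dl.
Proof.
move=> Hd H j; rewrite coordp_override; case: (j \in l); first exact: H.
by rewrite Rminus_eq_0 Rabs_R0.
Qed.

Lemma close_to_updp w w0 dl j v : close_to w w0 dl -> Rabs (v - coordp w0 j) < dl ->
  close_to (updp w j v) w0 dl.
Proof. by move=> H Hv j'; rewrite coordp_updp; case: eqP => [->|_]. Qed.

Lemma uniform_delta (P : J -> R -> Prop) :
  (forall k, exists dl, 0 < dl /\ forall dl', 0 < dl' <= dl -> P k dl') ->
  exists dl, 0 < dl /\ forall k, P k dl.
Proof.
move=> H.
have Hl : forall l : seq J, exists dl, 0 < dl /\
    forall k, k \in l -> forall dl', 0 < dl' <= dl -> P k dl'.
  elim => [|i l [dl [Hdl IH]]]; first by exists 1; split => //; lra.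
  have [di [Hdi Hi]] := H i.
  exists (Rmin dl di); split; first exact: Rmin_pos.
  have := Rmin_l dl di; have := Rmin_r dl di.
  move=> ? ? k; rewrite in_cons; case: eqP => [-> _|_ /= Hk] dl' Hdl'.
    by apply: Hi; lra.
  by apply: IH => //; lra.
have [dl [Hdl H']] := Hl (enum {: J}).
by exists dl; split => // k; apply: H'; [rewrite mem_enum | lra].
Qed.

Lemma cont2_close_to G w0 : cont2 G w0 ->
  forall e, 0 < e -> exists dl, 0 < dl /\ forall w, close_to w w0 dl -> Rabs (G w - G w0) < e.
Proof.
move=> H e He; have [dl [Hdl H']] := H e He.
exists dl; split => // w Hw; apply: H' => c.
by split; [exact: (Hw (inl c)) | exact: (Hw (inr c))].
Qed.

Lemma close_to_continuous (u : R -> W) s0 :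
  (forall k : J, continuity_pt (fun s => coordp (u s) k) s0) ->
  forall dc, 0 < dc -> exists dl, 0 < dl /\
    forall s, Rabs (s - s0) < dl -> close_to (u s) (u s0) dc.
Proof.
move=> H dc Hdc.
suff [dl [Hdl Hk]] : exists dl, 0 < dl /\ forall k s, Rabs (s - s0) < dl ->
    Rabs (coordp (u s) k - coordp (u s0) k) < dc.
  by exists dl; split => // s Hs k; apply: Hk.
apply: (uniform_delta (fun k dl => forall s, Rabs (s - s0) < dl ->
   Rabs (coordp (u s) k - coordp (u s0) k) < dc)) => k.
have [dl [Hdl H1]] := continuity_pt_eps _ _ (H k) dc Hdc.
by exists dl; split => // dl' Hdl' s Hs; apply: H1; lra.
Qed.

Lemma continuity_pt_cont2_comp (G : W -> R) (u : R -> W) s0 : cont2 G (u s0) ->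
  (forall k : J, continuity_pt (fun s => coordp (u s) k) s0) ->
  continuity_pt (fun s => G (u s)) s0.
Proof.
move=> HG Hu; apply: continuity_pt_of_eps => e He.
have [dc [Hdc Hc]] := cont2_close_to _ _ HG e He.
have [dl [Hdl Hl]] := close_to_continuous u s0 Hu dc Hdc.
by exists dl; split => // s Hs; apply: Hc; apply: Hl.
Qed.

Lemma Rabs_between a b x : Rmin a b <= x <= Rmax a b -> Rabs (x - a) <= Rabs (b - a).
Proof.
rewrite /Rmin /Rmax; case: Rle_dec => H Hx; rewrite /Rabs;
  case: Rcase_abs => ?; case: Rcase_abs => ?; lra.
Qed.

Lemma Rmult_approx P P0 q q0 e : 0 < e ->
  Rabs (P - P0) < e / (2 * (Rabs q0 + 1)) ->
  Rabs (q - q0) < Rmin 1 (e / (2 * (Rabs P0 + 1))) ->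
  Rabs (P * q - P0 * q0) < e.
Proof.
move=> He HP Hq.
have Hq0 := Rabs_pos q0; have HP0 := Rabs_pos P0.
have Hq1 := Rmin_l 1 (e / (2 * (Rabs P0 + 1))).
have Hq2 := Rmin_r 1 (e / (2 * (Rabs P0 + 1))).
have -> : P * q - P0 * q0 = (P - P0) * q + P0 * (q - q0) by ring.
apply: Rle_lt_trans (Rabs_triang _ _) _; rewrite !Rabs_mult.
have Hqa : Rabs q <= Rabs q0 + 1.
  have := Rabs_triang (q - q0) q0; replace (q - q0 + q0) with q by ring; lra.
have T1 : Rabs (P - P0) * Rabs q < e / 2.
  apply: Rle_lt_trans (_ : _ <= Rabs (P - P0) * (Rabs q0 + 1)) _.
    by apply: Rmult_le_compat_l; [apply: Rabs_pos | lra].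
  have -> : e / 2 = e / (2 * (Rabs q0 + 1)) * (Rabs q0 + 1) by field; lra.
  by apply: Rmult_lt_compat_r; lra.
have T2 : Rabs P0 * Rabs (q - q0) < e / 2.
  apply: Rle_lt_trans (_ : _ <= (Rabs P0 + 1) * Rabs (q - q0)) _.
    by apply: Rmult_le_compat_r; [apply: Rabs_pos | lra].
  have -> : e / 2 = (Rabs P0 + 1) * (e / (2 * (Rabs P0 + 1))) by field; lra.
  by apply: Rmult_lt_compat_l; lra.
lra.
Qed.

Section PartialDerivatives.
Variable G : W -> R.
Hypothesis G_partial : forall w j, ex_derive (fun v => G (updp w j v)) (coordp w j).
Hypothesis partial_cont2 : forall j w, cont2 (partial G j) w.

Lemma is_derive_updp (Q : W) j v :
  is_derive (fun v' => G (updp Q j v')) v (partial G j (updp Q j v)).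
Proof.
have H := Derive_correct _ _ (G_partial (updp Q j v) j).
have E : (fun v' => G (updp (updp Q j v) j v')) = (fun v' => G (updp Q j v')).
  by apply: functional_extensionality => v'; rewrite updp_updp.
by rewrite /partial E coordp_updp_eq; rewrite E coordp_updp_eq in H.
Qed.

(* Mean value theorem in the coordinate [j], then continuity of the partial derivative. *)
Lemma is_derive_coord_change (Q : R -> W) (b : R -> R) (u0 : W) j s0 bd :
  b s0 = coordp u0 j ->
  (forall dc, 0 < dc -> exists dl, 0 < dl /\
     forall s, Rabs (s - s0) < dl -> close_to (Q s) u0 dc) ->
  is_derive b s0 bd ->
  is_derive (fun s => G (updp (Q s) j (b s)) - G (updp (Q s) j (b s0))) s0
    (partial G j u0 * bd).
Proof.
move=> Hb0 HQ Hbd; apply: is_derive_of_eps => e He.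
set P0 := partial G j u0.
have He1 : 0 < e / (2 * (Rabs bd + 1)) by apply: Rdiv_lt_0_compat; have := Rabs_pos bd; lra.
have He3 : 0 < Rmin 1 (e / (2 * (Rabs P0 + 1))).
  by apply: Rmin_pos; [lra | apply: Rdiv_lt_0_compat; have := Rabs_pos P0; lra].
have [dc [Hdc HcP]] := cont2_close_to _ _ (partial_cont2 j u0) _ He1.
have [eta1 [Heta1 HQ1]] := HQ dc Hdc.
have Hbc : continuity_pt b s0 by apply: continuity_pt_of_ex_derive; exists bd.
have [eta2 [Heta2 Hb2]] := continuity_pt_eps _ _ Hbc dc Hdc.
have [eta3 [Heta3 Hb3]] := is_derive_eps _ _ _ Hbd _ He3.
exists (Rmin eta1 (Rmin eta2 eta3)); split; first by do 2?apply: Rmin_pos.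
move=> h Hh0 Hh.
have := Rmin_l eta1 (Rmin eta2 eta3); have := Rmin_r eta1 (Rmin eta2 eta3).
have := Rmin_l eta2 eta3; have := Rmin_r eta2 eta3 => ? ? ? ?.
set Qh := Q (s0 + h).
have [xi [Hxi Hmvt]] := MVT_gen (fun v => G (updp Qh j v)) (b s0) (b (s0 + h))
   (fun v => partial G j (updp Qh j v)) (fun v _ => is_derive_updp Qh j v)
   (fun v _ => continuity_pt_of_ex_derive _ _ (ex_intro _ _ (is_derive_updp Qh j v))).
rewrite Rminus_eq_0 Rminus_0_r /= Hmvt.
have -> : partial G j (updp Qh j xi) * (b (s0 + h) - b s0) / h
          = partial G j (updp Qh j xi) * ((b (s0 + h) - b s0) / h) by field.
apply: Rmult_approx => //; last by apply: Hb3 => //; lra.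
have Hsh : Rabs (s0 + h - s0) < Rmin eta1 (Rmin eta2 eta3).
  by replace (s0 + h - s0) with h by ring.
apply: HcP; apply: close_to_updp; first by apply: HQ1; lra.
rewrite -Hb0; apply: Rle_lt_trans (Rabs_between _ _ _ Hxi) _.
by apply: Hb2; lra.
Qed.

Lemma is_derive_override (u : R -> W) s0 (bd : J -> R) :
  (forall k, is_derive (fun s => coordp (u s) k) s0 (bd k)) ->
  forall l : seq J, uniq l ->
  is_derive (fun s => G (override l (u s0) (u s))) s0
    (sumJ l (fun k => partial G k (u s0) * bd k)).
Proof.
move=> Hu.
have Hcu k : continuity_pt (fun s => coordp (u s) k) s0.
  by apply: continuity_pt_of_ex_derive; exists (bd k).
elim => [|j l IH] /=; first by move=> _; apply: is_derive_const.
move=> /andP [Hjl Hl].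
set Q := fun s => override l (u s0) (u s).
have HQj s : coordp (Q s) j = coordp (u s0) j.
  by rewrite /Q coordp_override (negbTE Hjl).
have H2 : is_derive (fun s => (G (updp (Q s) j (coordp (u s) j))
      - G (updp (Q s) j (coordp (u s0) j))) + G (Q s)) s0
   (plus (partial G j (u s0) * bd j) (sumJ l (fun k => partial G k (u s0) * bd k))).
  apply: (is_derive_plus _ _ _ _ _ _ (IH Hl)); apply: is_derive_coord_change => //.
  move=> dc Hdc; have [dl [Hdl H]] := close_to_continuous u s0 Hcu dc Hdc.
  by exists dl; split => // s Hs; apply: close_to_override => //; apply: H.
apply: (is_derive_ext _ _ _ _ _ H2) => s.
by rewrite -(HQj s) updp_coordp /plus /Q /=; ring.
Qed.

Lemma is_derive_partial_chain (u : R -> W) s0 (bd : J -> R) :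
  (forall k, is_derive (fun s => coordp (u s) k) s0 (bd k)) ->
  is_derive (fun s => G (u s)) s0 (sumJ (enum {: J}) (fun k => partial G k (u s0) * bd k)).
Proof.
move=> Hu; apply: (is_derive_ext (fun s => G (override (enum {: J}) (u s0) (u s)))).
  by move=> s; rewrite override_enum.
exact: is_derive_override Hu _ (enum_uniq _).
Qed.

End PartialDerivatives.

Lemma Ck_open_sumJ k a b (F : J -> R -> R) : forall l : seq J,
  (forall j, Ck_open k (F j) a b) -> Ck_open k (fun s => sumJ l (fun j => F j s)) a b.
Proof.
elim => [|j l IH] H /=; first exact: Ck_open_const.
by apply: Ck_open_plus; [exact: H | exact: IH].
Qed.

Lemma Ck_open_smooth_comp (f : vec d -> vec d -> vec d) : smooth_fun f ->
  forall k js c (u : R -> W) a b,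
  (forall j, Ck_open k (fun s => coordp (u s) j) a b) ->
  Ck_open k (fun s => iter_partial js (fun w0 => f (fst w0) (snd w0) c) (u s)) a b.
Proof.
move=> Hf; elim => [|k IH] js c u a b Hu.
  move=> s Hs /=; apply: continuity_pt_cont2_comp; first by have [_ H] := Hf c js (u s).
  by move=> j; apply: Hu.
set G := iter_partial js (fun w0 => f (fst w0) (snd w0) c).
set G' := fun s => sumJ (enum {: J})
  (fun j => partial G j (u s) * Derive (fun s => coordp (u s) j) s).
have HD s : a < s < b -> is_derive (fun s => G (u s)) s (G' s).
  move=> Hs; apply: is_derive_partial_chain.
  - by move=> w j; have [H _] := Hf c js w; apply: H.
  - by move=> j w; have [_ H] := Hf c (j :: js) w.
  - by move=> j; apply: Derive_correct; have [H _] := Hu j; apply: H.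
split; first by move=> s Hs; eexists; apply: HD.
apply: (Ck_open_ext _ G') => [s Hs|]; first by symmetry; apply: is_derive_unique; apply: HD.
apply: Ck_open_sumJ => j; apply: Ck_open_mult; last by have [_ H] := Hu j.
by apply: (IH (j :: js)) => j'; apply: Ck_open_pred; apply: Hu.
Qed.

End ChainRule.

(** * Continuous right derivatives are derivatives *)

Definition right_deriv (g : R -> R) s l := forall e, 0 < e -> exists dl, 0 < dl /\
  forall u, s < u < s + dl -> Rabs ((g u - g s) / (u - s) - l) < e.

Lemma right_deriv_opp g s l : right_deriv g s l -> right_deriv (fun u => - g u) s (- l).
Proof.
move=> H e He; have [dl [Hdl H']] := H e He; exists dl; split => // u Hu.
have -> : (- g u - - g s) / (u - s) - - l = - ((g u - g s) / (u - s) - l) by field; lra.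
by rewrite Rabs_Ropp; apply: H'.
Qed.

Lemma right_deriv_sub_lin g s l K :
  right_deriv g s l -> right_deriv (fun u => g u - K * u) s (l - K).
Proof.
move=> H e He; have [dl [Hdl H']] := H e He; exists dl; split => // u Hu.
have -> : (g u - K * u - (g s - K * s)) / (u - s) - (l - K) = (g u - g s) / (u - s) - l.
  by field; lra.
exact: H'.
Qed.

(* The supremum of the points of [c, e] where [g] has not yet exceeded [g c]
   is reached by continuity and cannot lie before [e] by the right derivative. *)
Lemma right_deriv_neg_le (g F : R -> R) c e : c < e ->
  (forall s, c <= s <= e -> continuity_pt g s) ->
  (forall s, c <= s < e -> right_deriv g s (F s)) ->
  (forall s, c <= s < e -> F s < 0) -> g e <= g c.
Proof.
move=> Hce Hg HF Hneg.
set E := fun s => c <= s <= e /\ g s <= g c.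
have Eb : bound E by exists e => s [[? ?] _].
have Ec : E c by split; [lra | apply: Rle_refl].
have [sg [Hub Hlub]] := completeness E Eb (ex_intro _ c Ec).
have Hcs : c <= sg by apply: Hub.
have Hse : sg <= e by apply: Hlub => s [[? ?] _].
have Esg : g sg <= g c.
  apply: Rnot_lt_le => Hlt.
  have [dl [Hdl H]] := continuity_pt_eps _ _ (Hg sg ltac:(lra)) (g sg - g c) ltac:(lra).
  have [s [[Hs Es] Hs']] : exists s, E s /\ sg - dl < s.
    apply: NNPP => Hn; have : sg <= sg - dl; last lra.
    apply: Hlub => s Es; apply: Rnot_lt_le => Hs; apply: Hn; by exists s.
  have Hssg : s <= sg by apply: Hub.
  have := H s ltac:(rewrite Rabs_left1; lra); move=> /Rabs_def2 [? ?]; lra.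
case: (Rle_lt_or_eq_dec sg e Hse) => [Hsl|<-]; last by [].
have [dl [Hdl H]] := HF sg ltac:(lra) (- F sg) ltac:(have := Hneg sg ltac:(lra); lra).
have Hmp : 0 < Rmin dl (e - sg) by apply: Rmin_pos; lra.
have := Rmin_l dl (e - sg); have := Rmin_r dl (e - sg) => ? ?.
set u := sg + Rmin dl (e - sg) / 2.
have /Rabs_def2 [Hq _] := H u ltac:(rewrite /u; lra).
have Hgu : g u - g sg < 0.
  have E1 : (g u - g sg) / (u - sg) * (u - sg) = g u - g sg by field; rewrite /u; lra.
  by rewrite -E1; apply: Rmult_neg_pos; [lra | rewrite /u; lra].
have : u <= sg by apply: Hub; split; [rewrite /u; lra | lra].
rewrite /u; lra.
Qed.

Lemma mean_value_right_deriv (g F : R -> R) c e K : c < e ->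
  (forall s, c <= s <= e -> continuity_pt g s) ->
  (forall s, c <= s < e -> right_deriv g s (F s)) ->
  (forall s, c <= s < e -> F s < K) -> g e - g c <= K * (e - c).
Proof.
move=> Hce Hg HF HK.
suff : g e - K * e <= g c - K * c by lra.
apply: (right_deriv_neg_le (fun u => g u - K * u) (fun u => F u - K)) => //.
- move=> s Hs; apply: continuity_pt_minus; first exact: Hg.
  by apply: continuity_pt_of_ex_derive; auto_derive.
- by move=> s Hs; apply: right_deriv_sub_lin; apply: HF.
- by move=> s Hs; have := HK s Hs; lra.
Qed.

Lemma secant_right_deriv (g F : R -> R) c e l eps : c < e ->
  (forall s, c <= s <= e -> continuity_pt g s) ->
  (forall s, c <= s < e -> right_deriv g s (F s)) ->
  (forall s, c <= s < e -> Rabs (F s - l) < eps) ->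
  Rabs ((g e - g c) / (e - c) - l) <= eps.
Proof.
move=> Hce Hg HF Hl.
have Hup : g e - g c <= (l + eps) * (e - c).
  apply: (mean_value_right_deriv g F) => // s Hs.
  by have /Rabs_def2 [? ?] := Hl s Hs; lra.
have Hlo : - g e - - g c <= (- l + eps) * (e - c).
  apply: (mean_value_right_deriv (fun u => - g u) (fun u => - F u)) => //.
  - by move=> s Hs; apply: continuity_pt_opp; apply: Hg.
  - by move=> s Hs; apply: right_deriv_opp; apply: HF.
  - by move=> s Hs; have /Rabs_def2 [? ?] := Hl s Hs; lra.
have -> : (g e - g c) / (e - c) - l = (g e - g c - l * (e - c)) / (e - c) by field; lra.
rewrite Rabs_div; last lra.
rewrite (Rabs_right (e - c)); last lra.
apply: (Rmult_le_reg_r (e - c)); first lra.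
rewrite /Rdiv Rmult_assoc Rinv_l; last lra.
by rewrite Rmult_1_r; apply: Rabs_le; lra.
Qed.

Lemma is_derive_of_right_deriv g F a b t0 : a < t0 < b ->
  (forall s, a < s < b -> continuity_pt g s) ->
  (forall s, a < s < b -> right_deriv g s (F s)) ->
  (forall s, a < s < b -> continuity_pt F s) -> is_derive g t0 (F t0).
Proof.
move=> Ht Hg HF HFc; apply: is_derive_of_eps => e He.
have [d1 [Hd1 H1]] := continuity_pt_eps _ _ (HFc t0 Ht) (e / 2) ltac:(lra).
have Hp : 0 < Rmin d1 (Rmin (t0 - a) (b - t0)) by do 2?apply: Rmin_pos; lra.
exists (Rmin d1 (Rmin (t0 - a) (b - t0))); split => // h Hh0 /Rabs_def2 [Ha Hb].
have := Rmin_l d1 (Rmin (t0 - a) (b - t0)); have := Rmin_r d1 (Rmin (t0 - a) (b - t0)).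
have := Rmin_l (t0 - a) (b - t0); have := Rmin_r (t0 - a) (b - t0) => ? ? ? ?.
have Hsec c e' : c < e' -> t0 - d1 < c -> e' < t0 + d1 -> a < c -> e' < b ->
    Rabs ((g e' - g c) / (e' - c) - F t0) <= e / 2.
  move=> Hce ? ? ? ?; apply: (secant_right_deriv g F) => // s Hs.
  - by apply: Hg; lra.
  - by apply: HF; lra.
  - by apply: H1; apply: Rabs_def1; lra.
case: (Rle_lt_dec h 0) => Hh.
  have -> : (g (t0 + h) - g t0) / h = (g t0 - g (t0 + h)) / (t0 - (t0 + h)).
    by field; split => //; lra.
  by apply: Rle_lt_trans (Hsec _ _ _ _ _ _ _) _; lra.
have -> : (g (t0 + h) - g t0) / h = (g (t0 + h) - g t0) / (t0 + h - t0).
  by congr (_ / _); ring.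
by apply: Rle_lt_trans (Hsec _ _ _ _ _ _ _) _; lra.
Qed.

Lemma has_deriv_within_of_is_derive a b g s l : is_derive g s l -> has_deriv_within a b g s l.
Proof.
move=> H; apply: has_deriv_within_of_eps => e He.
have [dl [Hdl H']] := is_derive_eps _ _ _ H e He.
exists dl; split => // u _ Hus Hd.
by have := H' (u - s) ltac:(lra) Hd; replace (s + (u - s)) with u by ring.
Qed.

Lemma has_deriv_within_sub a b a' b' g s l : a <= a' -> b' <= b ->
  has_deriv_within a b g s l -> has_deriv_within a' b' g s l.
Proof.
move=> H1 H2 H; apply: has_deriv_within_of_eps => e He.
have [dl [Hdl H']] := has_deriv_within_eps _ _ _ _ _ H e He.
by exists dl; split => // u Hu; apply: H'; lra.
Qed.

Lemma has_deriv_within_ext a b g g' s l : a <= s <= b ->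
  (forall u, a <= u <= b -> g u = g' u) ->
  has_deriv_within a b g s l -> has_deriv_within a b g' s l.
Proof.
move=> Hs He; apply: filterlim_within_ext => u [Hu _].
by rewrite (He u Hu) (He s Hs).
Qed.

Lemma within_interval_proper a b s : a < b -> a <= s <= b ->
  ProperFilter' (within (fun u => a <= u <= b /\ u <> s) (locally s)).
Proof.
move=> Hab Hs; split; last by apply: within_filter; apply: locally_filter.
move=> [eps Heps].
have Hm : 0 < Rmin eps (b - a) by apply: Rmin_pos; [apply: cond_pos | lra].
have := Rmin_l eps (b - a); have := Rmin_r eps (b - a) => ? ?.
case: (Rlt_or_le s ((a + b) / 2)) => Hmid.
  apply: (Heps (s + Rmin eps (b - a) / 2)); last by split; lra.
  by apply/ball_Rabs; rewrite Rabs_right; lra.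
apply: (Heps (s - Rmin eps (b - a) / 2)); last by split; lra.
by apply/ball_Rabs; rewrite Rabs_left; lra.
Qed.

Lemma has_deriv_within_unique a b g s l l' : a < b -> a <= s <= b ->
  has_deriv_within a b g s l -> has_deriv_within a b g s l' -> l = l'.
Proof.
move=> Hab Hs; have HP := within_interval_proper a b s Hab Hs.
exact: filterlim_locally_unique.
Qed.

Lemma deriv_chain_unique {d : nat} a b k (g : R -> vec d) D D' : a < b ->
  deriv_chain a b k g D -> deriv_chain a b k g D' ->
  forall j, (j <= k)%nat -> forall s, a <= s <= b -> forall c, D j s c = D' j s c.
Proof.
move=> Hab [H0 H1] [H0' H1']; elim => [|j IH] Hj s Hs c; first by rewrite H0 // H0'.
apply: (has_deriv_within_unique a b (fun u => D j u c) s) => //; first exact: H1.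
apply: (has_deriv_within_ext a b (fun u => D' j u c)) => //; last exact: H1'.
by move=> u Hu; symmetry; apply: IH => //; lia.
Qed.

Lemma deriv_chain_sub {d : nat} a b a' b' k (g : R -> vec d) D : a <= a' -> b' <= b ->
  deriv_chain a b k g D -> deriv_chain a' b' k g D.
Proof.
move=> H1 H2 [H0 Hd]; split; first by move=> s Hs; apply: H0; lra.
by move=> j s Hj Hs c; apply: (has_deriv_within_sub a b) => //; apply: Hd => //; lra.
Qed.

Lemma deriv_chain_ext {d : nat} a b k (g g' : R -> vec d) D :
  (forall s, a <= s <= b -> forall c, g s c = g' s c) ->
  deriv_chain a b k g D -> deriv_chain a b k g' D.
Proof. by move=> He [H0 Hd]; split => // s Hs c; rewrite -He //; apply: H0. Qed.

Lemma deriv_chain_le {d : nat} a b k k' (g : R -> vec d) D : (k <= k')%nat ->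
  deriv_chain a b k' g D -> deriv_chain a b k g D.
Proof. by move=> Hk [H0 H1]; split => // j s Hj; apply: H1; lia. Qed.

(** * Smoothing by the method of steps *)

Lemma cont_within_ext D g g' s : D s -> (forall u, D u -> g u = g' u) ->
  cont_within D g s -> cont_within D g' s.
Proof.
move=> Ds He H; rewrite /cont_within -(He s Ds).
by apply: filterlim_within_ext H.
Qed.

Lemma cont_within_glue a m b g s : cont_within (Icc a m) g s -> cont_within (Icc m b) g s ->
  cont_within (Icc a b) g s.
Proof.
move=> H1 H2; apply: cont_within_of_eps => e He.
have [d1 [Hd1 K1]] := cont_within_eps _ _ _ H1 e He.
have [d2 [Hd2 K2]] := cont_within_eps _ _ _ H2 e He.
exists (Rmin d1 d2); split; first exact: Rmin_pos.
have := Rmin_l d1 d2; have := Rmin_r d1 d2 => ? ? u [Hau Hub] Hu.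
case: (Rle_or_lt u m) => Hum; [apply: K1 | apply: K2]; rewrite /Icc; lra.
Qed.

Lemma continuity_pt_of_cont_within a b g s : a < s < b -> cont_within (Icc a b) g s ->
  continuity_pt g s.
Proof.
move=> Hs H; apply: continuity_pt_of_eps => e He.
have [dl [Hdl K]] := cont_within_eps _ _ _ H e He.
exists (Rmin dl (Rmin (s - a) (b - s))); split; first by do 2?apply: Rmin_pos; lra.
have := Rmin_l dl (Rmin (s - a) (b - s)); have := Rmin_r dl (Rmin (s - a) (b - s)).
have := Rmin_l (s - a) (b - s); have := Rmin_r (s - a) (b - s) => ? ? ? ? u Hu.
by apply: K => //; have /Rabs_def2 [? ?] := Hu; rewrite /Icc; lra.
Qed.

Section MethodOfSteps.
Variables (d : nat) (tau : R) (f : vec d -> vec d -> vec d) (x0 : R -> vec d) (T : R)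
  (x : R -> vec d).
Hypothesis tau_gt0 : 0 < tau.
Hypothesis f_smooth : smooth_fun f.
Hypothesis x0_cont :
  forall s, -tau <= s <= 0 -> forall c, cont_within (Icc (-tau) 0) (fun u => x0 u c) s.
Hypothesis x_sol : is_solution tau f x0 T x.

Lemma solution_continuous c : Ck_open 0 (fun u => x u c) (- tau) T.
Proof.
have [Hx0 [Hxc _]] := x_sol.
have Hleft s : -tau <= s <= 0 -> cont_within (Icc (-tau) 0) (fun u => x u c) s.
  move=> Hs; apply: (cont_within_ext _ (fun u => x0 u c)) (x0_cont s Hs c) => //.
  by move=> u Hu; rewrite Hx0.
move=> s Hs; case: (Rtotal_order s 0) => [Hlt|[Heq|Hgt]].
- by apply: (continuity_pt_of_cont_within (-tau) 0); [lra | apply: Hleft; lra].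
- apply: (continuity_pt_of_cont_within (-tau) T); first lra.
  by rewrite Heq; apply: (cont_within_glue _ 0); [apply: Hleft | apply: Hxc]; lra.
- by apply: (continuity_pt_of_cont_within 0 T); [lra | apply: Hxc; lra].
Qed.

Definition delay_state (s : R) : vec d * vec d := (x s, x (s - tau)).

Definition delay_rhs (c : 'I_d) (s : R) : R := f (x s) (x (s - tau)) c.

Lemma Ck_open_delay_rhs k a b c :
  (forall c', Ck_open k (fun u => x u c') (a - tau) b) -> Ck_open k (delay_rhs c) a b.
Proof.
move=> Hx; apply: (Ck_open_smooth_comp d f f_smooth k nil c delay_state) => -[] c' /=.
  by apply: Ck_open_sub (Hx c'); lra.
by apply: Ck_open_sub (Ck_open_shift _ _ _ _ (- tau) (Hx c')); lra.
Qed.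

Lemma solution_derive c s : 0 < s < T -> is_derive (fun u => x u c) s (delay_rhs c s).
Proof.
have [_ [_ Hrd]] := x_sol.
move=> Hs; apply: (is_derive_of_right_deriv _ _ 0 T) => //.
- by move=> u Hu; apply: solution_continuous; lra.
- by move=> u Hu; apply: at_right_lim_eps; apply: Hrd; lra.
- apply: (Ck_open_delay_rhs 0) => c'.
  by apply: Ck_open_sub (solution_continuous c'); lra.
Qed.

Lemma solution_smoothing k c : Ck_open k (fun u => x u c) (INR k * tau - tau) T.
Proof.
elim: k c => [|k IH] c.
  by apply: Ck_open_sub (solution_continuous c); rewrite /=; lra.
have Hk : 0 <= INR k * tau by apply: Rmult_le_pos; [apply: pos_INR | lra].
rewrite S_INR; split.
  by move=> s Hs; eexists; apply: solution_derive; lra.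
apply: (Ck_open_ext _ (delay_rhs c)).
  by move=> s Hs; symmetry; apply: is_derive_unique; apply: solution_derive; lra.
by apply: Ck_open_delay_rhs => c'; apply: Ck_open_sub (IH c'); lra.
Qed.

End MethodOfSteps.

Lemma is_derive_shift (g : R -> R) t u l : is_derive g (t + u) l ->
  is_derive (fun v => g (t + v)) u l.
Proof.
move=> H; have Ht : is_derive (fun v : R => t + v) u 1 by auto_derive.
by have := is_derive_comp g (fun v => t + v) u l 1 H Ht; rewrite scal_one.
Qed.

Section SmoothSegments.
Variables (d : nat) (x : R -> vec d) (K : nat) (al be : R).
Hypothesis x_Ck : forall c, Ck_open K (fun u => x u c) al be.

Lemma seg_deriv_chain t a b : al < t + a -> t + b < be ->
  deriv_chain a b K (seg x t) (fun j u c => Derive_n (fun v => x v c) j (t + u)).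
Proof.
move=> Ha Hb; split => // j s Hj Hs c.
apply: has_deriv_within_of_is_derive; apply: (is_derive_shift (Derive_n (fun v => x v c) j)).
by have [H _] := Ck_open_Derive_n _ _ _ _ (x_Ck c) j (t + s) ltac:(lra); apply: H.
Qed.

Lemma seg_Ck_on t a b : al < t + a -> t + b < be -> Ck_on a b K (seg x t).
Proof.
move=> Ha Hb; exists (fun j u c => Derive_n (fun v => x v c) j (t + u)).
split; first exact: seg_deriv_chain.
move=> s Hs c; apply: cont_within_of_eps => e He.
have [_ H] := Ck_open_Derive_n _ _ _ _ (x_Ck c) K (t + s) ltac:(lra).
have [dl [Hdl H']] := continuity_pt_eps _ _ (H (le_n _)) e He.
exists dl; split => // u _ Hu; apply: H'.
by replace (t + u - (t + s)) with (u - s) by ring.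
Qed.

Lemma taylor_at_Derive_n a b k s v : al < a -> a < b -> b < be -> (k <= K)%nat ->
  a <= s <= b -> taylor_at a b k x s v ->
  forall c, v c = Derive_n (fun u => x u c) k s / INR (fact k).
Proof.
move=> H1 H2 H3 Hk Hs [D [HD Hv]] c; rewrite Hv.
have HR : deriv_chain a b K x (fun j s c => Derive_n (fun u => x u c) j s).
  split => // j u Hj Hu c'; apply: has_deriv_within_of_is_derive.
  by have [H _] := Ck_open_Derive_n _ _ _ _ (x_Ck c') j u ltac:(lra); apply: H.
by rewrite (deriv_chain_unique a b k x D _ H2 HD (deriv_chain_le a b k K x _ Hk HR) k
  (le_n _) s Hs c).
Qed.

(* [yt] agrees with the segment only on [a, b), so the two chains of derivatives
   are compared on [a, (s + b) / 2]. *)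
Lemma piece_taylor_seg t (yt : R -> vec d) a b k s v : al < t + a -> t + b <= be ->
  (k <= K)%nat -> a <= s < b -> (forall u, a <= u < b -> forall c, yt u c = seg x t u c) ->
  taylor_at a b k yt s v -> forall c, v c = Derive_n (fun u => x u c) k (t + s) / INR (fact k).
Proof.
move=> H1 H2 Hk Hs Hy [D [HD Hv]] c; rewrite Hv.
set b' := (s + b) / 2.
have HD' : deriv_chain a b' k (seg x t) D.
  apply: (deriv_chain_ext a b' k yt); first by move=> u Hu c'; apply: Hy; rewrite /b' in Hu; lra.
  by apply: (deriv_chain_sub a b) HD; rewrite /b'; lra.
have HR : deriv_chain a b' k (seg x t) (fun j u c => Derive_n (fun v => x v c) j (t + u)).
  by apply: (deriv_chain_le a b' k K) => //; apply: seg_deriv_chain; rewrite /b'; lra.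
by rewrite (deriv_chain_unique a b' k (seg x t) _ _ ltac:(rewrite /b'; lra) HD' HR k
  (le_n _) s ltac:(rewrite /b'; lra) c).
Qed.

Lemma in_box_of_taylor_at a b k s (v : vec d) B : al < a -> a < b -> b < be ->
  (k <= K)%nat -> a <= s <= b ->
  (exists v', taylor_at a b k x s v' /\ in_box v' B) ->
  (forall c, v c = Derive_n (fun u => x u c) k s / INR (fact k)) -> in_box v B.
Proof.
move=> H1 H2 H3 Hk Hs [v' [Hv' Hb]] Hv c.
by rewrite Hv -(taylor_at_Derive_n a b k s v') //; apply: Hb.
Qed.

End SmoothSegments.

(** * Enclosures on the window *)

Lemma in_hull_of_in_box {d : nat} (v : vec d) A As : In A As -> in_box v A -> in_hull v As.
Proof. by move=> HA Hv B HB; apply: HB A HA v Hv. Qed.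

Lemma hull_list_head {d : nat} (A : box d) B r Z : In A (hull_list A B r Z).
Proof. by left. Qed.

Lemma hull_list_mid {d : nat} (A : box d) B r Z j : (1 <= j <= r)%nat ->
  In (B j) (hull_list A B r Z).
Proof. by move=> Hj; right; apply: in_or_app; left; apply: in_map; apply/in_seq; lia. Qed.

Lemma hull_list_last {d : nat} (A : box d) B r Z : In Z (hull_list A B r Z).
Proof. by right; apply: in_or_app; right; left. Qed.

Lemma window_cover M h e1 e2 (r : nat) s : 0 < h -> 0 < e1 < h -> 0 < e2 < h ->
  (1 <= r)%nat -> M * h + e1 <= s <= (M + INR r) * h + e2 ->
  (M * h + e1 <= s <= (M + 1) * h) \/
  (exists j : nat, (1 <= j <= r - 1)%nat /\ (M + INR j) * h <= s <= (M + INR j + 1) * h) \/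
  ((M + INR r) * h <= s <= (M + INR r) * h + e2).
Proof.
move=> Hh He1 He2 Hr Hs.
case: (Rle_or_lt s ((M + 1) * h)) => H1; first by left; lra.
case: (Rle_or_lt ((M + INR r) * h) s) => H2; first by right; right; lra.
right; left.
set y := (s - M * h) / h.
have Es : s = M * h + y * h by rewrite /y; field; lra.
have Hy0 : 1 < y by apply: (Rmult_lt_reg_r h) => //; lra.
have Hy1 : y < INR r by apply: (Rmult_lt_reg_r h) => //; lra.
have [j [Hj1 Hj2]] := nfloor_ex y ltac:(lra).
exists j; split.
  have : (0 < j)%nat by apply: INR_lt; rewrite /=; lra.
  have : (j < r)%nat by apply: INR_lt; lra.
  lia.
have : INR j * h <= y * h by apply: Rmult_le_compat_r; lra.
have : y * h < (INR j + 1) * h by apply: Rmult_lt_compat_r; lra.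
lra.
Qed.

Section Window.
Variables (d p : nat) (tau T : R) (x : R -> vec d) (m mbar : nat) (eps1 eps2 : R)
  (L : nat -> nat -> box d) (C : nat -> nat -> nat -> box d) (Rb Rt : nat -> nat -> box d).
Local Notation h := (hstep p tau).
Local Notation n := (m / p - 1)%nat.
Hypothesis p_ge1 : (1 <= p)%nat.
Hypothesis tau_gt0 : 0 < tau.
Hypothesis mbar_ge1 : (1 <= mbar)%nat.
Hypothesis eps1_bounds : 0 < eps1 < h.
Hypothesis eps2_bounds : 0 < eps2 < h.
Hypothesis T_large : INR (m + mbar + 1) * h + eps2 <= T.
Hypothesis mp_ge1 : (1 <= m / p)%nat.
Hypothesis x_Ck : forall c, Ck_open (S n) (fun u => x u c) (INR n * tau) T.
Hypothesis HL : forall k i : nat, (k <= S n)%nat -> (i <= p)%nat ->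
  forall s, (INR m - INR i) * h + eps1 <= s <= (INR m - INR i + 1) * h ->
  exists v, taylor_at ((INR m - INR i) * h + eps1) ((INR m - INR i + 1) * h) k x s v
            /\ in_box v (L k i).
Hypothesis HC : forall k i j : nat, (k <= S n)%nat -> (i <= p)%nat -> (1 <= j <= mbar)%nat ->
  forall s, (INR m - INR i + INR j) * h <= s <= (INR m - INR i + INR j + 1) * h ->
  exists v, taylor_at ((INR m - INR i + INR j) * h) ((INR m - INR i + INR j + 1) * h) k x s v
            /\ in_box v (C k i j).
Hypothesis HR : forall k i : nat, (k <= S n)%nat -> (i <= p)%nat ->
  forall s, (INR m - INR i + INR mbar) * h <= s <= (INR m - INR i + INR mbar) * h + eps2 ->
  exists v, taylor_at ((INR m - INR i + INR mbar) * h)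
                      ((INR m - INR i + INR mbar) * h + eps2) k x s v /\ in_box v (Rb k i).
Hypothesis HRt : forall k i : nat, (k <= S n)%nat -> (i <= p)%nat ->
  forall s, (INR m - INR i + INR mbar + 1) * h <= s <= (INR m - INR i + INR mbar + 1) * h + eps2 ->
  exists v, taylor_at ((INR m - INR i + INR mbar + 1) * h)
                      ((INR m - INR i + INR mbar + 1) * h + eps2) k x s v /\ in_box v (Rt k i).

Lemma hstep_gt0 : 0 < h.
Proof. by apply: Rdiv_lt_0_compat => //; apply: lt_0_INR; lia. Qed.

Lemma tau_hstep : tau = INR p * h.
Proof. by rewrite /hstep; field; apply: not_0_INR; lia. Qed.

Lemma INR_mult_hstep_le i j : (i <= j)%nat -> INR i * h <= INR j * h.
Proof. by move=> Hij; apply: Rmult_le_compat_r; [have := hstep_gt0; lra | apply: le_INR]. Qed.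

Lemma window_after_delay : INR n * tau + INR p * h <= INR m * h.
Proof.
have Htau : INR n * tau = INR n * (INR p * h).
  by rewrite /hstep; field; apply: not_0_INR; lia.
have Hn : INR (m / p) = INR n + 1 by rewrite minus_INR //=; lra.
have := INR_mult_hstep_le (p * (m / p)) m (Nat.Div0.mul_div_le m p).
by rewrite mult_INR Hn Htau; lra.
Qed.

Lemma window_in_hull k i s (v : vec d) : (k <= S n)%nat -> (i <= p)%nat ->
  (INR m - INR i) * h + eps1 <= s <= (INR m - INR i + INR mbar) * h + eps2 ->
  (forall c, v c = Derive_n (fun u => x u c) k s / INR (fact k)) ->
  in_hull v (hull_list (L k i) (C k i) (mbar - 1) (Rb k i)).
Proof.
move=> Hk Hi Hs Hv.
have Hh := hstep_gt0; have Hal := window_after_delay.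
have Hip := INR_mult_hstep_le i p Hi.
have := INR_mult_hstep_le 0 i (Nat.le_0_l i); rewrite /= Rmult_0_l => Hi0.
have := INR_mult_hstep_le 1 mbar mbar_ge1; rewrite /= Rmult_1_l => Hmb.
have := T_large; rewrite !plus_INR /= => HT.
have Hbox := in_box_of_taylor_at d x (S n) (INR n * tau) T x_Ck.
case: (window_cover (INR m - INR i) h eps1 eps2 mbar s) => // [H|[[j [Hj H]]|H]].
- apply: in_hull_of_in_box (hull_list_head _ _ _ _) _.
  by apply: Hbox (HL k i Hk Hi s H) Hv => //; lra.
- have := INR_mult_hstep_le (S j) mbar ltac:(lia); rewrite S_INR => Hjm.
  have := INR_mult_hstep_le 1 j ltac:(lia); rewrite /= Rmult_1_l => Hj1.
  apply: in_hull_of_in_box (hull_list_mid _ _ _ _ _ Hj) _.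
  by apply: Hbox (HC k i j Hk Hi ltac:(lia) s H) Hv => //; lra.
- apply: in_hull_of_in_box (hull_list_last _ _ _ _) _.
  by apply: Hbox (HR k i Hk Hi s H) Hv => //; lra.
Qed.

Lemma window_in_hull_ext k i s (v : vec d) : (k <= S n)%nat -> (1 <= i <= p)%nat ->
  (INR m - INR i) * h + eps1 <= s <= (INR m - INR i + INR mbar + 1) * h + eps2 ->
  (forall c, v c = Derive_n (fun u => x u c) k s / INR (fact k)) ->
  in_hull v (hull_list (L k i) (C k i) mbar (Rt k i)).
Proof.
move=> Hk [Hi1 Hi] Hs Hv.
have Hh := hstep_gt0; have Hal := window_after_delay.
have Hip := INR_mult_hstep_le i p Hi.
have := INR_mult_hstep_le 1 i Hi1; rewrite /= Rmult_1_l => Hih.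
have := INR_mult_hstep_le 1 mbar mbar_ge1; rewrite /= Rmult_1_l => Hmb.
have := T_large; rewrite !plus_INR /= => HT.
have Hbox := in_box_of_taylor_at d x (S n) (INR n * tau) T x_Ck.
have Hmb1 : INR (mbar + 1) = INR mbar + 1 by rewrite plus_INR.
have := window_cover (INR m - INR i) h eps1 eps2 (mbar + 1) s Hh eps1_bounds eps2_bounds
  ltac:(lia) ltac:(rewrite Hmb1; lra).
rewrite Hmb1 => -[H|[[j [Hj H]]|H]].
- apply: in_hull_of_in_box (hull_list_head _ _ _ _) _.
  by apply: Hbox (HL k i Hk Hi s H) Hv => //; lra.
- have Hjm := INR_mult_hstep_le j mbar ltac:(lia).
  have := INR_mult_hstep_le 1 j ltac:(lia); rewrite /= Rmult_1_l => Hj1.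
  apply: in_hull_of_in_box (hull_list_mid (L k i) (C k i) mbar (Rt k i) j ltac:(lia)) _.
  by apply: Hbox (HC k i j Hk Hi ltac:(lia) s H) Hv => //; lra.
- apply: in_hull_of_in_box (hull_list_last _ _ _ _) _.
  by apply: Hbox (HRt k i Hk Hi s ltac:(lra)) Hv => //; lra.
Qed.

Section Segment.
Variable t : R.
Hypothesis t_window : INR m * h + eps1 <= t <= INR (m + mbar) * h + eps2.

Lemma segment_bounds : INR n * tau < t - tau /\ t + h <= T.
Proof.
have := window_after_delay; have := tau_hstep; have := T_large; have := t_window.
rewrite !plus_INR /=; lra.
Qed.

Lemma segment_in_Cp : in_Cp p tau (fun _ => n) (seg x t).
Proof.
move=> i Hi; exists (seg x t); split => //.
have := INR_mult_hstep_le i p ltac:(lia); have := INR_mult_hstep_le 1 i ltac:(lia).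
have [? ?] := segment_bounds; have := tau_hstep.
rewrite /tgrid Nat.add_1_r /= Rmult_1_l => ? ? ?.
by apply: (seg_Ck_on d x (S n) (INR n * tau) T x_Ck); lra.
Qed.

Lemma segment_Ck_on : Ck_on (-tau) 0 (S n) (seg x t).
Proof.
have [? ?] := segment_bounds; have := hstep_gt0 => ?.
by apply: (seg_Ck_on d x (S n) (INR n * tau) T x_Ck); lra.
Qed.

Lemma segment_value_in_hull :
  in_hull (seg x t 0) (hull_list (L O O) (C O O) (mbar - 1) (Rb O O)).
Proof.
apply: (window_in_hull 0 0 t _ ltac:(lia) ltac:(lia)) => [|c].
  by have := t_window; rewrite plus_INR /=; lra.
by rewrite /seg Rplus_0_r /=; field.
Qed.

Lemma segment_piece_taylor i k s v : (1 <= i <= p)%nat -> (k <= S n)%nat -> 0 <= s < h ->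
  piece_taylor p tau (seg x t) i k (tgrid p tau i + s) v ->
  forall c, v c = Derive_n (fun u => x u c) k (t + (tgrid p tau i + s)) / INR (fact k).
Proof.
move=> Hi Hk Hs [yt [Hyt Hv]].
have Hip := INR_mult_hstep_le i p ltac:(lia).
have := INR_mult_hstep_le 1 i ltac:(lia); rewrite /= Rmult_1_l => Hih.
have [? ?] := segment_bounds; have := tau_hstep => ?.
rewrite /tgrid in Hyt Hv *.
by apply: (piece_taylor_seg d x (S n) (INR n * tau) T x_Ck t yt _ _ k _ v _ _ _ _ Hyt Hv)
  => //; lra.
Qed.

Lemma segment_jcoef_in_hull i k v : (1 <= i <= p)%nat -> (k <= n)%nat ->
  jcoef p tau (seg x t) i k v -> in_hull v (hull_list (L k i) (C k i) (mbar - 1) (Rb k i)).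
Proof.
move=> Hi Hk Hv.
have Hv' := segment_piece_taylor i k 0 v Hi ltac:(lia) ltac:(have := hstep_gt0; lra)
  ltac:(by rewrite Rplus_0_r).
apply: (window_in_hull k i _ v ltac:(lia) ltac:(lia)) Hv'.
by have := t_window; rewrite /tgrid plus_INR; lra.
Qed.

Lemma segment_xicoef_in_hull i s v : (1 <= i <= p)%nat -> 0 <= s < h ->
  xicoef p tau n (seg x t) i s v ->
  in_hull v (hull_list (L (S n) i) (C (S n) i) mbar (Rt (S n) i)).
Proof.
move=> Hi Hs Hv.
have Hv' := segment_piece_taylor i (S n) s v Hi (le_n _) Hs Hv.
apply: (window_in_hull_ext (S n) i _ v (le_n _) Hi) Hv'.
by have := t_window; rewrite /tgrid plus_INR; lra.
Qed.

End Segment.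

Lemma window_segments t : INR m * h + eps1 <= t <= INR (m + mbar) * h + eps2 ->
  (in_Cp p tau (fun _ => n) (seg x t) /\ Ck_on (-tau) 0 (S n) (seg x t)) /\
  in_hull (seg x t 0) (hull_list (L O O) (C O O) (mbar - 1) (Rb O O)) /\
  (forall i k : nat, (1 <= i <= p)%nat -> (k <= n)%nat ->
     forall v, jcoef p tau (seg x t) i k v ->
       in_hull v (hull_list (L k i) (C k i) (mbar - 1) (Rb k i))) /\
  (forall i : nat, (1 <= i <= p)%nat -> forall s, 0 <= s < h ->
     forall v, xicoef p tau n (seg x t) i s v ->
       in_hull v (hull_list (L (S n) i) (C (S n) i) mbar (Rt (S n) i))).
Proof.
move=> Ht; split; [split|split; [|split]].
- exact: segment_in_Cp.
- exact: segment_Ck_on.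
- exact: segment_value_in_hull.
- by move=> i k Hi Hk v; apply: segment_jcoef_in_hull.
- by move=> i Hi s Hs v; apply: segment_xicoef_in_hull.
Qed.

End Window.

Theorem mainTheorem3
  (d p : nat) (tau : R) (f : vec d -> vec d -> vec d)
  (x0 : R -> vec d) (T : R) (x : R -> vec d)
  (m mbar : nat) (eps1 eps2 : R)
  (L : nat -> nat -> box d) (C : nat -> nat -> nat -> box d)
  (Rb Rt : nat -> nat -> box d) :
  (1 <= d)%nat -> (1 <= p)%nat -> 0 < tau -> smooth_fun f ->
  (exists eta : nat -> nat, in_Cp p tau eta x0) ->
  (forall s, -tau <= s <= 0 -> forall c, cont_within (Icc (-tau) 0) (fun u => x0 u c) s) ->
  is_solution tau f x0 T x ->
  (1 <= mbar)%nat ->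
  0 < eps1 < hstep p tau -> 0 < eps2 < hstep p tau ->
  INR (m + mbar + 1) * hstep p tau + eps2 <= T ->
  (1 <= m / p)%nat ->
  let h := hstep p tau in
  let n := (m / p - 1)%nat in
  (forall k i : nat, (k <= S n)%nat -> (i <= p)%nat ->
     forall s, (INR m - INR i) * h + eps1 <= s <= (INR m - INR i + 1) * h ->
     exists v, taylor_at ((INR m - INR i) * h + eps1) ((INR m - INR i + 1) * h) k x s v
               /\ in_box v (L k i)) ->
  (forall k i j : nat, (k <= S n)%nat -> (i <= p)%nat -> (1 <= j <= mbar)%nat ->
     forall s, (INR m - INR i + INR j) * h <= s <= (INR m - INR i + INR j + 1) * h ->
     exists v, taylor_at ((INR m - INR i + INR j) * h) ((INR m - INR i + INR j + 1) * h) k x s v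
               /\ in_box v (C k i j)) ->
  (forall k i : nat, (k <= S n)%nat -> (i <= p)%nat ->
     forall s, (INR m - INR i + INR mbar) * h <= s <= (INR m - INR i + INR mbar) * h + eps2 ->
     exists v, taylor_at ((INR m - INR i + INR mbar) * h) ((INR m - INR i + INR mbar) * h + eps2) k x s v
               /\ in_box v (Rb k i)) ->
  (forall k i : nat, (k <= S n)%nat -> (i <= p)%nat ->
     forall s, (INR m - INR i + INR mbar + 1) * h <= s <= (INR m - INR i + INR mbar + 1) * h + eps2 ->
     exists v, taylor_at ((INR m - INR i + INR mbar + 1) * h) ((INR m - INR i + INR mbar + 1) * h + eps2) k x s v
               /\ in_box v (Rt k i)) ->
  forall t, INR m * h + eps1 <= t <= INR (m + mbar) * h + eps2 ->
    (* (a) *)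
    (in_Cp p tau (fun _ => n) (seg x t) /\ Ck_on (-tau) 0 (S n) (seg x t)) /\
    (* (b) *)
    in_hull (seg x t 0) (hull_list (L O O) (C O O) (mbar - 1) (Rb O O)) /\
    (* (c) *)
    (forall i k : nat, (1 <= i <= p)%nat -> (k <= n)%nat ->
       forall v, jcoef p tau (seg x t) i k v ->
         in_hull v (hull_list (L k i) (C k i) (mbar - 1) (Rb k i))) /\
    (* (d) *)
    (forall i : nat, (1 <= i <= p)%nat ->
       forall s, 0 <= s < h ->
       forall v, xicoef p tau n (seg x t) i s v ->
         in_hull v (hull_list (L (S n) i) (C (S n) i) mbar (Rt (S n) i))).
Proof.
move=> _ Hp Htau Hf _ Hx0c Hsol Hmb He1 He2 HT Hmp h n HL HC HR HRt.
have Hx c : Ck_open (S n) (fun u => x u c) (INR n * tau) T.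
  apply: Ck_open_sub (solution_smoothing d tau f x0 T x Htau Hf Hx0c Hsol (S n) c);
  by [rewrite S_INR; lra | lra].
exact: (window_segments d p tau T x m mbar eps1 eps2 L C Rb Rt Hp Htau Hmb He1 He2 HT Hmp
  Hx HL HC HR HRt).
Qed.
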